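(* Let $(\mathscr F,\Gamma)\colon(\mathcal C,\mathbb E,\mathfrak s)\to(\mathcal D,\mathbb F,\mathfrak t)$ be any $n$-exangulated functor. Then $$\widetilde{\mathsf E_{(\mathscr F,\Gamma)}}\circ\mathsf{Shin}_{(\mathcal C,\mathbb E)}=\mathsf{Shin}_{(\mathcal D,\mathbb F)}\circ\mathsf E_{(\widetilde{\mathscr F},\widetilde\Gamma)}$$ as exact functors $(\widetilde{\mathbb E}\text{-}\mathrm{Ext}(\widetilde{\mathcal C}),\mathcal X_{\widetilde{\mathbb E}})\to(\widetilde{\mathbb F\text{-}\mathrm{Ext}(\mathcal D)},\widetilde{\mathcal X_{\mathbb F}})$. Consequently the collection $\mathsf{Shin}$ of exact equivalences $\mathsf{Shin}_{(\mathcal C,\mathbb E)}$, over all $n$-exangulated categories $(\mathcal C,\mathbb E,\mathfrak s)$, is a natural transformation from the composite ''first idempotent-complete the $n$-exangulated category, then take its category of extensions'' to the composite ''first take the category of extensions, then idempotent-complete the exact category'' (as functors from $n$-exangulated categories and $n$-exangulated functors to idempotent complete exact categories and exact functors).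
   Context: $n\ge1$; $n$-exangulated categories in the sense of Herschend–Liu–Nakaoka. Write $a_*\alpha=\mathbb E(C,a)(\alpha)$, $c^*\alpha=\mathbb E(c,A)(\alpha)$. An $n$-exangulated functor $(\mathscr F,\Gamma)$: additive $\mathscr F$, natural $\Gamma\colon\mathbb E(-,-)\Rightarrow\mathbb F(\mathscr F-,\mathscr F-)$ with $\mathfrak s(\alpha)=[X_\bullet]\Rightarrow\mathfrak t(\Gamma\alpha)=[\mathscr FX_\bullet]$. Category of extensions $\mathbb E\text{-}\mathrm{Ext}(\mathcal C)$: objects $\alpha\in\mathbb E(C,A)$, morphisms $(a,c)\colon\alpha\to\beta\in\mathbb E(D,B)$ with $a_*\alpha=c^*\beta$; exact structure $\mathcal X_{\mathbb E}$: sequences $\alpha\xrightarrow{(a,c)}\beta\xrightarrow{(b,d)}\gamma$ with $a,c$ sections, $b=\mathrm{coker}\,a$, $d=\mathrm{coker}\,c$. For $(\mathscr F,\Gamma)$, the exact functor $\mathsf E_{(\mathscr F,\Gamma)}\colon\mathbb E\text{-}\mathrm{Ext}(\mathcal C)\to\mathbb F\text{-}\mathrm{Ext}(\mathcal D)$ is $\alpha\mapsto\Gamma(\alpha)$, $(a,c)\mapsto(\mathscr Fa,\mathscr Fc)$. Idempotent completion $\widetilde{\mathcal A}$ of additive $\mathcal A$: objects $(X,e)$, $e$ idempotent; morphisms $(e_Y,f,e_X)$ with $fe_X=f=e_Yf$; composition $(e_Z,g,e_Y)(e_Y,f,e_X)=(e_Z,gf,e_X)$. For an additive functor $\mathscr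 H$, $\widetilde{\mathscr H}(X,e)=(\mathscr HX,\mathscr He)$, $\widetilde{\mathscr H}(e_Y,f,e_X)=(\mathscr He_Y,\mathscr Hf,\mathscr He_X)$. For exact $(\mathcal A,\mathcal X)$, $\widetilde{\mathcal X}$ = direct summands of images of $\mathcal X$ under $X\mapsto(X,1_X)$. $\widetilde{\mathbb E}((C,e_C),(A,e_A))=\{(e_A,\alpha,e_C)\mid(e_A)_*\alpha=\alpha=(e_C)^*\alpha\}$ with $\widetilde{\mathbb E}((e_C,d,e_D),(e_B,a,e_A))(e_A,\alpha,e_C)=(e_B,\mathbb E(d,a)\alpha,e_D)$; $\widetilde{\mathfrak s}(e_A,\alpha,e_C)=[(X_\bullet,e_\bullet)]$ where $\mathfrak s(\alpha)=[X_\bullet]$, $e_\bullet$ an idempotent chain endomorphism with $e_0=e_A$, $e_{n+1}=e_C$, and $(X_\bullet,e_\bullet)$ has terms $(X_i,e_i)$, differentials $(e_{i+1},e_{i+1}d_i,e_i)$. $\widetilde\Gamma(e_A,\alpha,e_C)=(\mathscr Fe_A,\Gamma(\alpha),\mathscr Fe_C)$. The exact equivalence $\mathsf{Shin}_{(\mathcal C,\mathbb E)}\colon\widetilde{\mathbb E}\text{-}\mathrm{Ext}(\widetilde{\mathcal C})\to\widetilde{\mathbb E\text{-}\mathrm{Ext}(\mathcal C)}$ is $(e_A,\alpha,e_C)\mapsto(\alpha,(e_A,e_C))$, $((e_B,a,e_A),(e_D,c,e_C))\mapsto((e_B,e_D),(a,c),(e_A,e_C))$. *)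

From HB Require Import structures.
From mathcomp Require Import all_boot all_algebra.
Set Implicit Arguments. Unset Strict Implicit. Unset Printing Implicit Defensive.
Import GRing.Theory.
Local Open Scope ring_scope.

Record precat := PreCat {
  Obj :> Type;
  Hom : Obj -> Obj -> zmodType;
  cmp : forall A B D : Obj, Hom B D -> Hom A B -> Hom A D;
  idc : forall A : Obj, Hom A A }.
Arguments Hom {p} A B.
Arguments cmp {p A B D} g f.
Arguments idc {p} A.

Record is_additive (C : precat) : Prop := {
  cmpA : forall (A B D E : C) (f : Hom A B) (g : Hom B D) (h : Hom D E),
           cmp h (cmp g f) = cmp (cmp h g) f;
  cmp1l : forall (A B : C) (f : Hom A B), cmp (idc B) f = f;
  cmp1r : forall (A B : C) (f : Hom A B), cmp f (idc A) = f;
  cmpDl : forall (A B D : C) (g1 g2 : Hom B D) (f : Hom A B),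
           cmp (g1 + g2) f = cmp g1 f + cmp g2 f;
  cmpDr : forall (A B D : C) (g : Hom B D) (f1 f2 : Hom A B),
           cmp g (f1 + f2) = cmp g f1 + cmp g f2;
  zero_obj : exists Z : C, idc Z = 0;
  biprod : forall A B : C, exists (P : C) (i1 : Hom A P) (i2 : Hom B P)
             (p1 : Hom P A) (p2 : Hom P B),
             [/\ cmp p1 i1 = idc A, cmp p2 i2 = idc B, cmp p1 i2 = 0,
                 cmp p2 i1 = 0 & cmp i1 p1 + cmp i2 p2 = idc P] }.

(* Biadditive functor E : C^op x C -> Ab.  Ext E Cc A = E(Cc, A),            *)
Record biadd (C : precat) := BiAdd {
  Ext : C -> C -> zmodType;
  Eact : forall Cc D A B : C, Hom D Cc -> Hom A B -> Ext Cc A -> Ext D B }.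
Arguments Eact {C} b {Cc D A B} d a x.

Record is_biadd (C : precat) (E : biadd C) : Prop := {
  Eact_add : forall (Cc D A B : C) (d : Hom D Cc) (a : Hom A B) (x y : Ext E Cc A),
      Eact E d a (x + y) = Eact E d a x + Eact E d a y;
  Eact_id : forall (Cc A : C) (x : Ext E Cc A), Eact E (idc Cc) (idc A) x = x;
  Eact_comp : forall (Cc D D' A B B' : C) (d : Hom D Cc) (d' : Hom D' D)
      (a : Hom A B) (a' : Hom B B') (x : Ext E Cc A),
      Eact E (cmp d d') (cmp a' a) x = Eact E d' a' (Eact E d a x);
  Eact_addl : forall (Cc D A B : C) (d1 d2 : Hom D Cc) (a : Hom A B) (x : Ext E Cc A),
      Eact E (d1 + d2) a x = Eact E d1 a x + Eact E d2 a x;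
  Eact_addr : forall (Cc D A B : C) (d : Hom D Cc) (a1 a2 : Hom A B) (x : Ext E Cc A),
      Eact E d (a1 + a2) x = Eact E d a1 x + Eact E d a2 x }.

Definition push (C : precat) (E : biadd C) (Cc A B : C) (a : Hom A B)
  (x : Ext E Cc A) : Ext E Cc B := Eact E (idc Cc) a x.
Definition pull (C : precat) (E : biadd C) (Cc D A : C) (c : Hom D Cc)
  (x : Ext E Cc A) : Ext E D A := Eact E c (idc A) x.
Arguments push {C} E {Cc A B} a x.
Arguments pull {C} E {Cc D A} c x.

(* Complexes X_0 -> X_1 -> ... -> X_{n+1} (only indices <= n+1 matter)        *)
Definition castH (C : precat) (A B : C) (p : A = B) : Hom A B :=
  match p in _ = B' return Hom A B' with erefl => idc A end.
Arguments castH {C A B} p.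

Record cpx (C : precat) := Cpx {
  Xo : nat -> C;
  Xd : forall i, Hom (Xo i) (Xo i.+1) }.
Arguments Xo {C} c i.
Arguments Xd {C} c i.

Record cpxAC (C : precat) (n : nat) (A Cc : C) := CpxAC {
  cx :> cpx C;
  cx_eA : Xo cx 0 = A;
  cx_eC : Xo cx n.+1 = Cc }.
Arguments cx_eA {C n A Cc} c.
Arguments cx_eC {C n A Cc} c.

Section Complexes.
Variables (C : precat) (n : nat).

Definition is_complex (X : cpx C) : Prop :=
  forall i, (i < n)%N -> cmp (Xd X i.+1) (Xd X i) = 0.

Definition is_cmor (X Y : cpx C) (f : forall i, Hom (Xo X i) (Xo Y i)) : Prop :=
  forall i, (i <= n)%N -> cmp (Xd Y i) (f i) = cmp (f i.+1) (Xd X i).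

Definition inA (A Cc : C) (X : cpxAC n A Cc) : Hom A (Xo X 0) := castH (esym (cx_eA X)).
Definition outA (A Cc : C) (X : cpxAC n A Cc) : Hom (Xo X 0) A := castH (cx_eA X).
Definition inC (A Cc : C) (X : cpxAC n A Cc) : Hom Cc (Xo X n.+1) := castH (esym (cx_eC X)).
Definition outC (A Cc : C) (X : cpxAC n A Cc) : Hom (Xo X n.+1) Cc := castH (cx_eC X).

Definition is_lift (A Cc B D : C) (X : cpxAC n A Cc) (Y : cpxAC n B D)
  (a : Hom A B) (c : Hom Cc D) (f : forall i, Hom (Xo X i) (Xo Y i)) : Prop :=
  [/\ is_cmor f, f 0%N = cmp (inA Y) (cmp a (outA X))
    & f n.+1 = cmp (inC Y) (cmp c (outC X))].
Arguments is_lift {A Cc B D} X Y a c f.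

Definition homotopic (X Y : cpx C) (f g : forall i, Hom (Xo X i) (Xo Y i)) : Prop :=
  exists h : forall i, Hom (Xo X i.+1) (Xo Y i),
    [/\ f 0%N - g 0%N = cmp (h 0%N) (Xd X 0),
        forall i, (i < n)%N -> f i.+1 - g i.+1 = cmp (h i.+1) (Xd X i.+1) + cmp (Xd Y i) (h i)
      & f n.+1 - g n.+1 = cmp (Xd Y n) (h n)].

Definition cidf (X : cpx C) : forall i, Hom (Xo X i) (Xo X i) := fun i => idc (Xo X i).
Definition ccomp (X Y Z : cpx C) (g : forall i, Hom (Xo Y i) (Xo Z i))
  (f : forall i, Hom (Xo X i) (Xo Y i)) : forall i, Hom (Xo X i) (Xo Z i) :=
  fun i => cmp (g i) (f i).

Definition hequiv (A Cc : C) (X Y : cpxAC n A Cc) : Prop :=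
  exists (f : forall i, Hom (Xo X i) (Xo Y i)) (g : forall i, Hom (Xo Y i) (Xo X i)),
    [/\ is_lift X Y (idc A) (idc Cc) f, is_lift Y X (idc A) (idc Cc) g,
        homotopic (ccomp g f) (cidf X) & homotopic (ccomp f g) (cidf Y)].

Variable E : biadd C.

Definition dX (A Cc : C) (X : cpxAC n A Cc) (x : Ext E Cc A) : Ext E (Xo X n.+1) (Xo X 0) :=
  Eact E (outC X) (inA X) x.

Definition is_nexangle (A Cc : C) (X : cpxAC n A Cc) (x : Ext E Cc A) : Prop :=
  [/\ is_complex X,
      push E (Xd X 0) (dX X x) = 0,
      pull E (Xd X n) (dX X x) = 0,
      (forall W : C,
        (forall i, (i < n)%N -> forall g : Hom W (Xo X i.+1),
           cmp (Xd X i.+1) g = 0 -> exists k : Hom W (Xo X i), g = cmp (Xd X i) k)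
        /\ (forall g : Hom W (Xo X n.+1),
           pull E g (dX X x) = 0 -> exists k : Hom W (Xo X n), g = cmp (Xd X n) k))
    & (forall W : C,
        (forall i, (i < n)%N -> forall g : Hom (Xo X i.+1) W,
           cmp g (Xd X i) = 0 -> exists k : Hom (Xo X i.+2) W, g = cmp k (Xd X i.+1))
        /\ (forall g : Hom (Xo X 0) W,
           push E g (dX X x) = 0 -> exists k : Hom (Xo X 1) W, g = cmp k (Xd X 0)))].

Definition biprod_at (P X1 X2 : C) (i1 : Hom X1 P) (i2 : Hom X2 P)
  (p1 : Hom P X1) (p2 : Hom P X2) : Prop :=
  [/\ cmp p1 i1 = idc X1, cmp p2 i2 = idc X2, cmp p1 i2 = 0, cmp p2 i1 = 0
    & cmp i1 p1 + cmp i2 p2 = idc P].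

(* M is the mapping cone of f : X -> Y :
   X_1 -> X_2 (+) Y_1 -> ... -> X_{n+1} (+) Y_n -> Y_{n+1}  *)
Definition is_cone (X Y : cpx C) (f : forall i, Hom (Xo X i) (Xo Y i)) (M : cpx C)
  (e0 : Xo M 0 = Xo X 1) (e1 : Xo M n.+1 = Xo Y n.+1) : Prop :=
  exists (i1 : forall i, Hom (Xo X i.+1) (Xo M i)) (i2 : forall i, Hom (Xo Y i) (Xo M i))
         (p1 : forall i, Hom (Xo M i) (Xo X i.+1)) (p2 : forall i, Hom (Xo M i) (Xo Y i)),
  [/\ forall i, (1 <= i <= n)%N -> biprod_at (i1 i) (i2 i) (p1 i) (p2 i),
      cmp (p1 1%N) (cmp (Xd M 0) (castH (esym e0))) = - Xd X 1
      /\ cmp (p2 1%N) (cmp (Xd M 0) (castH (esym e0))) = f 1%N,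
      forall i, (1 <= i < n)%N ->
        [/\ cmp (p1 i.+1) (cmp (Xd M i) (i1 i)) = - Xd X i.+1,
            cmp (p1 i.+1) (cmp (Xd M i) (i2 i)) = 0,
            cmp (p2 i.+1) (cmp (Xd M i) (i1 i)) = f i.+1
          & cmp (p2 i.+1) (cmp (Xd M i) (i2 i)) = Xd Y i]
    & cmp (castH e1) (cmp (Xd M n) (i1 n)) = f n.+1
      /\ cmp (castH e1) (cmp (Xd M n) (i2 n)) = Xd Y n].

End Complexes.
Arguments is_lift {C n A Cc B D} X Y a c f.

(* M is the mapping cocone of g : X -> Y (here n = m+1):
   X_0 -> X_1 (+) Y_0 -> X_2 (+) Y_1 -> ... -> X_n (+) Y_{n-1} -> Y_n ;
   the biproduct at position k+1 is X_{k+1} (+) Y_k.                        *)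
Definition is_cocone (C : precat) (m : nat) (X Y : cpx C)
  (g : forall i, Hom (Xo X i) (Xo Y i)) (M : cpx C)
  (e0 : Xo M 0 = Xo X 0) (e1 : Xo M m.+2 = Xo Y m.+1) : Prop :=
  exists (i1 : forall k, Hom (Xo X k.+1) (Xo M k.+1)) (i2 : forall k, Hom (Xo Y k) (Xo M k.+1))
         (p1 : forall k, Hom (Xo M k.+1) (Xo X k.+1)) (p2 : forall k, Hom (Xo M k.+1) (Xo Y k)),
  [/\ forall k, (k <= m)%N -> biprod_at (i1 k) (i2 k) (p1 k) (p2 k),
      cmp (p1 0%N) (cmp (Xd M 0) (castH (esym e0))) = - Xd X 0
      /\ cmp (p2 0%N) (cmp (Xd M 0) (castH (esym e0))) = g 0%N,
      forall k, (k < m)%N ->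
        [/\ cmp (p1 k.+1) (cmp (Xd M k.+1) (i1 k)) = - Xd X k.+1,
            cmp (p1 k.+1) (cmp (Xd M k.+1) (i2 k)) = 0,
            cmp (p2 k.+1) (cmp (Xd M k.+1) (i1 k)) = g k.+1
          & cmp (p2 k.+1) (cmp (Xd M k.+1) (i2 k)) = Xd Y k]
    & cmp (castH e1) (cmp (Xd M m.+1) (i1 m)) = g m.+1
      /\ cmp (castH e1) (cmp (Xd M m.+1) (i2 m)) = Xd Y m].

(* n-exangulated categories (Herschend-Liu-Nakaoka), n = m+1 >= 1            *)
(* nreal x X  means  s(x) = [X]  (X ranges over C^{n+2}_{(A,Cc)}).           *)
Record nexang (m : nat) := NExAng {
  ncat : precat;
  nE : biadd ncat;
  nreal : forall Cc A : ncat, Ext nE Cc A -> cpxAC m.+1 A Cc -> Prop }.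
Arguments nreal {m} n {Cc A} x X.

Section NExAngAxioms.
Variables (m : nat) (T : nexang m).
Local Notation n := m.+1.
Local Notation C := (ncat T).
Local Notation E := (nE T).
Local Notation s := (nreal T).

Definition is_inflation (A B : C) (f : Hom A B) : Prop :=
  exists (Cc : C) (x : Ext E Cc A) (X : cpxAC n A Cc) (h : Xo X 1 = B),
    s x X /\ cmp (castH h) (cmp (Xd X 0) (inA X)) = f.

Definition is_deflation (B Cc : C) (g : Hom B Cc) : Prop :=
  exists (A : C) (x : Ext E Cc A) (X : cpxAC n A Cc) (h : Xo X n = B),
    s x X /\ cmp (outC X) (cmp (Xd X n) (castH (esym h))) = g.

Record is_nexang : Prop := {
  nx_additive : is_additive C;
  nx_biadd : is_biadd E;
  (* s(x) is exactly one homotopy equivalence class in C^{n+2}_{(A,Cc)} *)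
  nx_real_ex : forall (Cc A : C) (x : Ext E Cc A), exists X, s x X;
  nx_real_cls : forall (Cc A : C) (x : Ext E Cc A) (X Y : cpxAC n A Cc),
      s x X -> (s x Y <-> hequiv X Y);
  nx_R0 : forall (Cc A D B : C) (x : Ext E Cc A) (y : Ext E D B) (a : Hom A B) (c : Hom Cc D)
      (X : cpxAC n A Cc) (Y : cpxAC n B D),
      push E a x = pull E c y -> s x X -> s y Y -> exists f, is_lift X Y a c f;
  nx_R1 : forall (Cc A : C) (x : Ext E Cc A) (X : cpxAC n A Cc), s x X -> is_nexangle X x;
  (* (R2): s(0 in E(0,A)) = [A -1-> A -> 0 -> ... -> 0] *)
  nx_R2 : forall (A Z : C), idc Z = 0 -> forall (X : cpxAC n A Z) (h1 : Xo X 1 = A),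
      (forall i, (2 <= i <= n.+1)%N -> Xo X i = Z) ->
      cmp (castH h1) (cmp (Xd X 0) (inA X)) = idc A -> s (0 : Ext E Z A) X;
  (* (R2) dual: s(0 in E(A,0)) = [0 -> ... -> 0 -> A -1-> A] *)
  nx_R2op : forall (A Z : C), idc Z = 0 -> forall (X : cpxAC n Z A) (hn : Xo X n = A),
      (forall i, (i < n)%N -> Xo X i = Z) ->
      cmp (outC X) (cmp (Xd X n) (castH (esym hn))) = idc A -> s (0 : Ext E A Z) X;
  nx_EA1_infl : forall (A B D : C) (f : Hom A B) (g : Hom B D),
      is_inflation f -> is_inflation g -> is_inflation (cmp g f);
  nx_EA1_defl : forall (A B D : C) (f : Hom A B) (g : Hom B D),
      is_deflation f -> is_deflation g -> is_deflation (cmp g f);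
  nx_EA2 : forall (A Cc D : C) (r : Ext E D A) (c : Hom Cc D)
      (X : cpxAC n A Cc) (Y : cpxAC n A D),
      s (pull E c r) X -> s r Y ->
      exists f, is_lift X Y (idc A) c f /\
        exists M : cpxAC n (Xo X 1) D,
          is_cone f (cx_eA M) (etrans (cx_eC M) (esym (cx_eC Y)))
          /\ s (push E (cmp (Xd X 0) (inA X)) r) M;
  nx_EA2op : forall (A B Cc : C) (r : Ext E Cc A) (a : Hom A B)
      (X : cpxAC n A Cc) (Y : cpxAC n B Cc),
      s r X -> s (push E a r) Y ->
      exists g, is_lift X Y a (idc Cc) g /\
        exists M : cpxAC n A (Xo Y n),
          is_cocone g (etrans (cx_eA M) (esym (cx_eA X))) (cx_eC M)
          /\ s (pull E (cmp (outC Y) (Xd Y n)) r) M }.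

End NExAngAxioms.

Record nexfun (m : nat) (T U : nexang m) := NExFun {
  Fo : ncat T -> ncat U;
  Fh : forall A B : ncat T, Hom A B -> Hom (Fo A) (Fo B);
  Gam : forall Cc A : ncat T, Ext (nE T) Cc A -> Ext (nE U) (Fo Cc) (Fo A) }.
Arguments Fo {m T U} n A.
Arguments Fh {m T U} n {A B} f.
Arguments Gam {m T U} n {Cc A} x.

Definition mapcpx (m : nat) (T U : nexang m) (F : nexfun T U) (A Cc : ncat T)
  (X : cpxAC m.+1 A Cc) : cpxAC m.+1 (Fo F A) (Fo F Cc) :=
  @CpxAC _ _ _ _ (@Cpx _ (fun i => Fo F (Xo X i)) (fun i => Fh F (Xd X i)))
    (f_equal (Fo F) (cx_eA X)) (f_equal (Fo F) (cx_eC X)).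

Record is_nexfun (m : nat) (T U : nexang m) (F : nexfun T U) : Prop := {
  nf_comp : forall (A B D : ncat T) (f : Hom A B) (g : Hom B D),
      Fh F (cmp g f) = cmp (Fh F g) (Fh F f);
  nf_id : forall A : ncat T, Fh F (idc A) = idc (Fo F A);
  nf_add : forall (A B : ncat T) (f g : Hom A B), Fh F (f + g) = Fh F f + Fh F g;
  nf_Gadd : forall (Cc A : ncat T) (x y : Ext (nE T) Cc A), Gam F (x + y) = Gam F x + Gam F y;
  nf_Gnat : forall (Cc D A B : ncat T) (d : Hom D Cc) (a : Hom A B) (x : Ext (nE T) Cc A),
      Gam F (Eact (nE T) d a x) = Eact (nE U) (Fh F d) (Fh F a) (Gam F x);
  nf_real : forall (Cc A : ncat T) (x : Ext (nE T) Cc A) (X : cpxAC m.+1 A Cc),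
      nreal T x X -> nreal U (Gam F x) (mapcpx F X) }.

Section ExtCat.
Variables (C : precat) (E : biadd C).

Record eobj := EObj { eo_C : C; eo_A : C; eo_x : Ext E eo_C eo_A }.
Record emor (X Y : eobj) := EMor { em_a : Hom (eo_A X) (eo_A Y); em_c : Hom (eo_C X) (eo_C Y) }.
Definition emor_valid (X Y : eobj) (f : emor X Y) : Prop :=
  push E (em_a f) (eo_x X) = pull E (em_c f) (eo_x Y).
Definition emor_comp (X Y Z : eobj) (g : emor Y Z) (f : emor X Y) : emor X Z :=
  EMor (cmp (em_a g) (em_a f)) (cmp (em_c g) (em_c f)).

(* the idempotent completion of E-Ext(C): objects (x, e), e idempotent *)
Record ieobj := IEObj { ie_x : eobj; ie_e : emor ie_x ie_x }.
Definition ieobj_valid (X : ieobj) : Prop :=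
  emor_valid (ie_e X) /\ emor_comp (ie_e X) (ie_e X) = ie_e X.
Record iemor := IEMor { iem_s : ieobj; iem_t : ieobj; iem_f : emor (ie_x iem_s) (ie_x iem_t) }.
Definition iemor_valid (f : iemor) : Prop :=
  [/\ ieobj_valid (iem_s f), ieobj_valid (iem_t f), emor_valid (iem_f f),
      emor_comp (iem_f f) (ie_e (iem_s f)) = iem_f f
    & emor_comp (ie_e (iem_t f)) (iem_f f) = iem_f f].

(* The category E~-Ext(C~) for the idempotent completion (C~, E~)            *)
(* object: (e_A, alpha, e_C) in E~((to_C, to_eC), (to_A, to_eA))             *)
Record tobj := TObj { to_C : C; to_eC : Hom to_C to_C;
                      to_A : C; to_eA : Hom to_A to_A; to_x : Ext E to_C to_A }.
Definition tobj_valid (X : tobj) : Prop :=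
  [/\ cmp (to_eC X) (to_eC X) = to_eC X, cmp (to_eA X) (to_eA X) = to_eA X,
      push E (to_eA X) (to_x X) = to_x X & pull E (to_eC X) (to_x X) = to_x X].
(* morphism (a~, c~) with a~ = (e_B, a, e_A) and c~ = (e_D, c, e_C) *)
Record tmor := TMor { tm_s : tobj; tm_t : tobj;
                      tm_a : Hom (to_A tm_s) (to_A tm_t); tm_c : Hom (to_C tm_s) (to_C tm_t) }.
(* a~_* alpha~ = E~(1_(C,e_C), a~) alpha~ = (e_B, E(e_C, a) alpha, e_C)
   c~^* beta~  = E~(c~, 1_(B,e_B)) beta~ = (e_B, E(c, e_B) beta, e_C)          *)
Definition tmor_valid (f : tmor) : Prop :=
  [/\ tobj_valid (tm_s f), tobj_valid (tm_t f),
      cmp (tm_a f) (to_eA (tm_s f)) = tm_a f /\ cmp (to_eA (tm_t f)) (tm_a f) = tm_a f,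
      cmp (tm_c f) (to_eC (tm_s f)) = tm_c f /\ cmp (to_eC (tm_t f)) (tm_c f) = tm_c f
    & Eact E (to_eC (tm_s f)) (tm_a f) (to_x (tm_s f))
      = Eact E (tm_c f) (to_eA (tm_t f)) (to_x (tm_t f))].

Definition Shin_obj (X : tobj) : ieobj :=
  @IEObj (EObj (to_x X)) (@EMor (EObj (to_x X)) (EObj (to_x X)) (to_eA X) (to_eC X)).
Definition Shin_mor (f : tmor) : iemor :=
  @IEMor (Shin_obj (tm_s f)) (Shin_obj (tm_t f))
    (@EMor (EObj (to_x (tm_s f))) (EObj (to_x (tm_t f))) (tm_a f) (tm_c f)).

End ExtCat.

Section Induced.
Variables (m : nat) (T U : nexang m) (F : nexfun T U).

Definition EF_obj (X : eobj (nE T)) : eobj (nE U) := EObj (Gam F (eo_x X)).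
Definition EF_mor (X Y : eobj (nE T)) (f : emor X Y) : emor (EF_obj X) (EF_obj Y) :=
  @EMor _ _ (EF_obj X) (EF_obj Y) (Fh F (em_a f)) (Fh F (em_c f)).

Definition iEF_obj (X : ieobj (nE T)) : ieobj (nE U) :=
  @IEObj _ _ (EF_obj (ie_x X)) (EF_mor (ie_e X)).
Definition iEF_mor (f : iemor (nE T)) : iemor (nE U) :=
  @IEMor _ _ (iEF_obj (iem_s f)) (iEF_obj (iem_t f)) (EF_mor (iem_f f)).

(* E_(F~,Gamma~) : E~-Ext(C~) -> F~-Ext(D~),
   Gamma~(e_A, alpha, e_C) = (F e_A, Gamma alpha, F e_C),
   F~(e_B, a, e_A) = (F e_B, F a, F e_A)                                       *)
Definition tEF_obj (X : tobj (nE T)) : tobj (nE U) :=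
  @TObj _ _ (Fo F (to_C X)) (Fh F (to_eC X)) (Fo F (to_A X)) (Fh F (to_eA X))
    (Gam F (to_x X)).
Definition tEF_mor (f : tmor (nE T)) : tmor (nE U) :=
  @TMor _ _ (tEF_obj (tm_s f)) (tEF_obj (tm_t f)) (Fh F (tm_a f)) (Fh F (tm_c f)).

End Induced.

From HB Require Import structures.
From mathcomp Require Import all_boot all_algebra.

(* Both composites send an object (e_A, alpha, e_C) to (Gamma alpha, (F e_A, F e_C))
   and a morphism ((e_B, a, e_A), (e_D, c, e_C)) to (F a, F c) with the images of
   the idempotents as source and target: the two functors coincide on the nose,
   by unfolding the definitions. *)

Lemma iEF_Shin_obj (m : nat) (T U : nexang m) (F : nexfun T U) (X : tobj (nE T)) :
  iEF_obj F (Shin_obj X) = Shin_obj (tEF_obj F X).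
Proof. by []. Qed.

Lemma iEF_Shin_mor (m : nat) (T U : nexang m) (F : nexfun T U) (f : tmor (nE T)) :
  iEF_mor F (Shin_mor f) = Shin_mor (tEF_mor F f).
Proof. by []. Qed.

(* None of the axioms of n-exangulated categories or functors, nor the validity
   of objects and morphisms, is needed: the identity holds for raw data. *)
Theorem theorem5p2 (m : nat) (T U : nexang m) (F : nexfun T U) :
  is_nexang T -> is_nexang U -> is_nexfun F ->
  (forall X : tobj (nE T), tobj_valid X ->
     iEF_obj F (Shin_obj X) = Shin_obj (tEF_obj F X)) /\
  (forall f : tmor (nE T), tmor_valid f ->
     iEF_mor F (Shin_mor f) = Shin_mor (tEF_mor F f)).
Proof.
move=> _ _ _; split=> [X _ | f _].
- exact: iEF_Shin_obj.
- exact: iEF_Shin_mor.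
Qed.
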